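(* Let $\mathcal{G}_n$ be the set of binary words $w=w_1\cdots w_{2n}$ with $n$ zeros and $n$ ones. For $w\in\mathcal{G}_n$ define $\mathrm{sz}(w)=|\{i\in[n]: w_i=w_{2n+1-i}=0\}|$, $o_{00}(w)=|\{i\in[n]: w_{2i-1}w_{2i}=00\}|$, and $\#_{001}(w)$ the number of indices $j$ with $w_jw_{j+1}w_{j+2}=001$. Then for all $n,k$, $$|\{w\in\mathcal{G}_n:\mathrm{sz}(w)=k\}|=|\{w\in\mathcal{G}_n:o_{00}(w)=k\}|=|\{w\in\mathcal{G}_n:\#_{001}(w)=k\}|.$$
   Context: $[n]=\{1,2,\dots,n\}$. Occurrences of $001$ are as consecutive subwords. *)

From mathcomp Require Import all_boot.
Set Implicit Arguments. Unset Strict Implicit. Unset Printing Implicit Defensive.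

(* Binary words of length 2n as (2n).-tuple bool; letter 0 = false, 1 = true.
   Positions are 0-based: w_i (paper, 1-based) is tnth-like nth false w (i-1). *)
Definition letter (n : nat) (w : (2 * n).-tuple bool) (j : nat) : bool :=
  nth false w j.

Definition inG (n : nat) (w : (2 * n).-tuple bool) : bool :=
  count (fun b => ~~ b) w == n.

Definition sz (n : nat) (w : (2 * n).-tuple bool) : nat :=
  #|[set j : 'I_n | ~~ letter w j && ~~ letter w (2 * n - 1 - j)]|.

Definition o00 (n : nat) (w : (2 * n).-tuple bool) : nat :=
  #|[set j : 'I_n | ~~ letter w (2 * j) && ~~ letter w (2 * j).+1]|.

Definition occ001 (n : nat) (w : (2 * n).-tuple bool) : nat :=
  #|[set j : 'I_(2 * n) | (j.+2 < 2 * n) &&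
      [&& ~~ letter w j, ~~ letter w j.+1 & letter w j.+2]]|.

(* The permutation of positions that reads w as w_1 w_2n w_2 w_(2n-1) ... w_n w_(n+1)
   preserves the number of zeros and turns sz into o00.

   For o00 and #001 we compare binomial moments, which determine a finite multiset of
   naturals: sum_w C(stat w, j) counts words with j marked occurrences. Deleting j marked
   00-pairs (chosen among the n pairs), or the two zeros of j marked factors 001 (these
   never overlap; the marks move to j of the n ones), leaves in both cases C(n, j) times
   the number of words of length 2n - 2j with n - 2j zeros. *)

From mathcomp Require Import all_boot zify.
Set Implicit Arguments. Unset Strict Implicit. Unset Printing Implicit Defensive.

Lemma eq_binomial_moments_perm (s1 s2 : seq nat) :
  (forall j, \sum_(x <- s1) 'C(x, j) = \sum_(x <- s2) 'C(x, j)) -> perm_eq s1 s2.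
Proof.
have [N] : {N | all (fun x => x < N) (s1 ++ s2)}.
  exists (\max_(x <- s1 ++ s2) x).+1; apply/allP => x x_s.
  by rewrite ltnS (@leq_bigmax_seq _ _ xpredT (fun x => x)).
elim: N s1 s2 => [|N IHN] s1 s2; first by case: s1 s2 => [|??] [|??].
rewrite all_cat => /andP[lt_s1 lt_s2] moments.
(* Below N.+1, the N-th moment counts the copies of N; strip them and recurse. *)
have moment_top s : all (fun x => x < N.+1) s -> \sum_(x <- s) 'C(x, N) = count_mem N s.
  elim: s => [|x s IHs] /=; first by rewrite big_nil.
  rewrite big_cons ltnS => /andP[le_xN /IHs ->]; congr (_ + _).
  by case: ltngtP le_xN => [lt_xN _|//|-> _]; [rewrite bin_small | rewrite binn].
have moment_drop s j : \sum_(x <- s) 'C(x, j) =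
    \sum_(x <- [seq x <- s | x != N]) 'C(x, j) + count_mem N s * 'C(N, j).
  elim: s => [|x s IHs] /=; first by rewrite !big_nil.
  by rewrite !big_cons IHs; case: eqP => [->|_]; rewrite ?big_cons /=; lia.
have count_top := moments N; rewrite !moment_top // in count_top.
have /IHN perm_drop : all (fun x => x < N) ([seq x <- s1 | x != N] ++ [seq x <- s2 | x != N]).
  have below x : x < N.+1 -> (x != N) ==> (x < N).
    by rewrite ltnS leq_eqVlt => /orP[/eqP->|->]; rewrite ?eqxx ?implybT.
  by rewrite all_cat !all_filter (sub_all below lt_s1) (sub_all below lt_s2).
have {}perm_drop : perm_eq [seq x <- s1 | x != N] [seq x <- s2 | x != N].
  apply: perm_drop => j; apply/(@addIn (count_mem N s1 * 'C(N, j))).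
  by rewrite -moment_drop count_top -moment_drop.
apply/allP => k _; apply/eqP; case: (eqVneq k N) => [-> // | neq_kN].
have /permP/(_ (pred1 k)) := perm_drop; rewrite !count_filter.
by rewrite !(@eq_count _ _ (pred1 k)) // => x /=; case: eqP => // ->; rewrite neq_kN.
Qed.

Fixpoint words (L : nat) : seq (seq bool) :=
  if L is L'.+1 then map (cons false) (words L') ++ map (cons true) (words L')
  else [:: [::]].

Lemma cons_injr (T : Type) (x : T) : injective (cons x).
Proof. by move=> s t []. Qed.

Lemma mem_words L w : (w \in words L) = (size w == L).
Proof.
elim: L w => [|L IHL] [|[] w] //=; rewrite mem_cat ?eqSS.
- by apply/norP; split; apply/mapP => -[].
- by rewrite (mem_map (@cons_injr _ _)) IHL; case: mapP => [[x _ []]|_].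
- by rewrite (mem_map (@cons_injr _ _)) IHL; case: mapP => [[x _ []]|_]; rewrite ?orbF.
Qed.

Lemma words_uniq L : uniq (words L).
Proof.
elim: L => //= L IHL; rewrite cat_uniq !map_inj_uniq ?IHL ?andbT //=; try exact: cons_injr.
by apply/hasPn => _ /mapP[w _ ->]; apply/mapP => -[].
Qed.

Lemma card_tuple_words L (P : pred (seq bool)) :
  #|[set w : L.-tuple bool | P w]| = count P (words L).
Proof.
have enum_words : perm_eq [seq val w | w : L.-tuple bool] (words L).
  apply: uniq_perm; rewrite ?words_uniq ?(map_inj_uniq val_inj) ?enum_uniq //.
  move=> w; rewrite mem_words; apply/mapP/eqP => [[t _ ->]|size_w].
    exact: size_tuple.
  by exists (Tuple (introT eqP size_w)); rewrite ?mem_enum.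
by rewrite -(permP enum_words) count_map -sum1dep_card -sum1_count big_enum_cond.
Qed.

Lemma big_wordsS L (F : seq bool -> nat) :
  \sum_(w <- words L.+1) F w = \sum_(w <- words L) (F (false :: w) + F (true :: w)).
Proof. by rewrite big_cat !big_map big_split. Qed.

Lemma big_words_blocks L (F : seq bool -> nat) :
  \sum_(w <- words L) F w =
    F (nseq L false) +
    \sum_(0 <= b < L) \sum_(w <- words (L - b.+1)) F (nseq b false ++ true :: w).
Proof.
elim: L F => [|L IHL] F; first by rewrite big_geq // big_seq1 addn0.
rewrite big_wordsS big_split /= IHL big_nat_recl // [LHS]addnAC -[LHS]addnA.
by congr (_ + (_ + _)); rewrite subSS subn0.
Qed.

Notation zeros := (count negb).
Notation ones := (count id).

Fixpoint o00_seq (w : seq bool) : nat :=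
  if w is a :: b :: w' then (~~ a && ~~ b) + o00_seq w' else 0.

(* Weighting by an arbitrary function of the number of zeros, rather than fixing that
   number, keeps truncated subtraction out of the induction. *)
Lemma o00_moment m j (f : nat -> nat) :
  \sum_(w <- words (2 * m)) f (zeros w) * 'C(o00_seq w, j) =
  'C(m, j) * \sum_(w <- words (2 * (m - j))) f (zeros w + 2 * j).
Proof.
elim: m j f => [|m IHm] [|j] f;
  try by rewrite bin0 mul1n subn0 muln0; apply: eq_bigr => w _; rewrite bin0 muln1 addn0.
  by rewrite muln0 big_seq1 bin0n muln0.
rewrite [2 * m.+1]mulnS !big_wordsS /=.
under eq_bigr do rewrite !add0n !add1n binS mulnDr.
rewrite !big_split /= (IHm j.+1 (fun z => f z.+2)) (IHm j (fun z => f z.+2)).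
rewrite (IHm j.+1 (fun z => f z.+1)) (IHm j.+1 f) subSS binS mulnDl.
set U := \sum_(w <- words (2 * (m - j))) f (zeros w + 2 * j.+1).
have -> : \sum_(w <- words (2 * (m - j))) f (zeros w + 2 * j).+2 = U.
  by apply: eq_bigr => w _; rewrite mulnS addnCA.
set A := fun k => \sum_(w <- words (2 * (m - j.+1))) f (k + (zeros w + 2 * j.+1)).
have split_U : 'C(m, j.+1) * U = 'C(m, j.+1) * (A 2 + A 1 + A 1 + A 0).
  have [le_mj | lt_jm] := leqP m j; first by rewrite bin_small ?ltnS // !mul0n.
  rewrite /A -!big_split /U (_ : 2 * (m - j) = (2 * (m - j.+1)).+2); last lia.
  rewrite !big_wordsS; congr (_ * _); apply: eq_bigr => w _ /=.
  by rewrite addnA; congr (f _ + f _ + f _ + f _); lia.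
by rewrite -/(A 2) -/(A 1) -/(A 0) split_U; lia.
Qed.

Fixpoint occ001_seq (w : seq bool) : nat :=
  if w is a :: w' then
    (if w' is b :: c :: _ then [&& ~~ a, ~~ b & c] else false) + occ001_seq w'
  else 0.

Lemma occ001_seq_nseq L : occ001_seq (nseq L false) = 0.
Proof. by elim: L => [|[|[|L]] IHL]. Qed.

Lemma occ001_seq_block b w :
  occ001_seq (nseq b false ++ true :: w) = (1 < b) + occ001_seq w.
Proof.
elim: b => [|b IHb]; first by case: w => [|? []].
rewrite [nseq _ _ ++ _]/= [occ001_seq _]/= IHb.
by case: b {IHb} => [|[|b]] //=; case: w.
Qed.

Lemma leq_occ001_seq_cons2 a b w : occ001_seq [:: a, b & w] <= (occ001_seq w).+1.
Proof. by case: a b w => [] [] [|[] [|[] w]]. Qed.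

Lemma leq_double_occ001_seq w : (occ001_seq w).*2 <= size w.
Proof.
elim: {w}(size w) {-2}w (leqnn (size w)) => [|n IHn] [|a [|b w]] //= le_w_n.
rewrite (leq_trans (_ : _ <= (occ001_seq w).+1.*2)) ?leq_double ?leq_occ001_seq_cons2 //.
by rewrite doubleS !ltnS IHn // -ltnS ltnW.
Qed.

Lemma zeros_block b w : zeros (nseq b false ++ true :: w) = b + zeros w.
Proof. by rewrite count_cat count_nseq mul1n. Qed.

Lemma ones_block b w : ones (nseq b false ++ true :: w) = (ones w).+1.
Proof. by rewrite count_cat count_nseq mul0n. Qed.

Lemma bin_addb (x : bool) m j : 'C(x + m, j.+1) = 'C(m, j.+1) + x * 'C(m, j).
Proof. by case: x; rewrite ?binS ?mul1n ?mul0n ?addn0. Qed.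

Lemma occ001_moment_short L j (f : nat -> nat) :
  L < 2 * j -> \sum_(w <- words L) f (zeros w) * 'C(occ001_seq w, j) = 0.
Proof.
move=> lt_L_2j; rewrite big_seq big1 // => w; rewrite mem_words => /eqP size_w.
by rewrite bin_small ?muln0 //; have := leq_double_occ001_seq w; rewrite size_w -mul2n; lia.
Qed.

Lemma occ001_moment K j (f : nat -> nat) :
  \sum_(w <- words (K + 2 * j)) f (zeros w) * 'C(occ001_seq w, j) =
  \sum_(w <- words K) f (zeros w + 2 * j) * 'C(ones w, j).
Proof.
elim/ltn_ind: K j f => K IHK [|j] f.
  by rewrite muln0 addn0; apply: eq_bigr => w _; rewrite !bin0 addn0.
rewrite big_words_blocks [RHS]big_words_blocks occ001_seq_nseq (count_nseq id) mul0n.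
rewrite bin0n !muln0 !add0n.
under eq_bigr => b _ do under eq_bigr => w _ do
  rewrite zeros_block occ001_seq_block bin_addb mulnDr mulnCA.
under [RHS]eq_bigr => b _ do under eq_bigr => w _ do
  rewrite zeros_block ones_block binS mulnDr.
under eq_bigr do rewrite big_split -big_distrr.
under [RHS]eq_bigr do rewrite big_split.
(* In both sums, a first block of K or more zeros leaves a suffix too short to carry the
   marked factors. *)
rewrite !big_split; congr (_ + _).
  rewrite (@big_cat_nat _ _ _ K) ?leq_addr //= [X in _ + X]big1_seq ?addn0.
    apply: eq_big_nat => b /andP[_ lt_bK].
    rewrite (_ : K + 2 * j.+1 - b.+1 = K - b.+1 + 2 * j.+1); last lia.
    rewrite (IHK (K - b.+1) _ j.+1 (fun z => f (b + z))); last lia.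
    by apply: eq_bigr => w _; rewrite addnA.
  move=> b; rewrite mem_index_iota => /andP[le_Kb lt_bL].
  by apply: (occ001_moment_short (fun z => f (b + z))); lia.
rewrite (_ : K + 2 * j.+1 = (K + 2 * j).+2); last lia.
rewrite !big_nat_recl //= !mul0n !add0n.
rewrite (@big_cat_nat _ _ _ K) ?leq_addr //= [X in _ + X]big1_seq ?addn0.
  apply: eq_big_nat => b /andP[_ lt_bK].
  rewrite mul1n (_ : (K + 2 * j).+2 - b.+3 = K - b.+1 + 2 * j); last lia.
  rewrite (IHK (K - b.+1) _ j (fun z => f (b.+2 + z))); last lia.
  by apply: eq_bigr => w _; congr (f _ * _); lia.
move=> b; rewrite mem_index_iota => /andP[le_Kb lt_bL].
by rewrite mul1n; apply: (occ001_moment_short (fun z => f (b.+2 + z))); lia.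
Qed.

Lemma o00_occ001_moments n j :
  \sum_(w <- words (2 * n) | zeros w == n) 'C(o00_seq w, j) =
  \sum_(w <- words (2 * n) | zeros w == n) 'C(occ001_seq w, j).
Proof.
pose f z : nat := z == n.
have indicator stat : \sum_(w <- words (2 * n) | zeros w == n) 'C(stat w, j) =
    \sum_(w <- words (2 * n)) f (zeros w) * 'C(stat w, j).
  by rewrite big_mkcond; apply: eq_bigr => w _; rewrite /f; case: eqP; rewrite ?mul1n.
rewrite !indicator (o00_moment n j f).
have [lt_nj | le_jn] := ltnP n j.
  by rewrite bin_small // mul0n (occ001_moment_short f) //; lia.
rewrite (_ : 2 * n = 2 * (n - j) + 2 * j); last lia.
rewrite (occ001_moment _ _ f) big_distrr; apply: eq_big_seq => w.
rewrite mem_words => /eqP size_w; rewrite /f /=.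
case: eqP => [zeros_w|_] /=; rewrite ?mul1n ?muln1 ?muln0 //.
have ones_w : ones w = n.
  have := count_predC id w; rewrite size_w.
  have -> : count (predC id) w = zeros w by apply: eq_count.
  lia.
by rewrite ones_w.
Qed.

Lemma perm_o00_occ001 n :
  perm_eq [seq o00_seq w | w <- words (2 * n) & zeros w == n]
          [seq occ001_seq w | w <- words (2 * n) & zeros w == n].
Proof.
apply: eq_binomial_moments_perm => j.
by rewrite !big_map !big_filter o00_occ001_moments.
Qed.

Lemma card_ord_count n (P : pred nat) : #|[set i : 'I_n | P i]| = count P (iota 0 n).
Proof.
by rewrite -sum1dep_card -(big_mkord P (fun _ => 1)) sum1_count /index_iota subn0.
Qed.

Lemma o00_seq_count n w : size w = n.*2 ->
  count (fun j => ~~ nth false w j.*2 && ~~ nth false w j.*2.+1) (iota 0 n) = o00_seq w.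
Proof.
elim: n w => [|n IHn] [|a [|b w]] // /eqP; rewrite ?doubleS // !eqSS => /eqP size_w.
rewrite -[iota 0 n.+1]/(0 :: iota (1 + 0) n) iotaDl -[0 :: _]cat1s count_cat count_map.
rewrite /= -IHn //; congr (_ + _); exact: addn0.
Qed.

Lemma occ001_seq_count w :
  count (fun j => (j.+2 < size w) &&
                  [&& ~~ nth false w j, ~~ nth false w j.+1 & nth false w j.+2])
    (iota 0 (size w)) = occ001_seq w.
Proof.
elim: w => [|a w IHw] //=; rewrite -IHw -[1]addn0 iotaDl count_map; congr (_ + _).
by case: w {IHw} => [|b [|c w]] //=; rewrite andbT andbA.
Qed.

Lemma o00E n (w : (2 * n).-tuple bool) : o00 w = o00_seq w.
Proof.
rewrite /o00 (card_ord_count n (fun j => ~~ letter w (2 * j) && ~~ letter w (2 * j).+1)).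
rewrite -(@o00_seq_count n) ?size_tuple ?mul2n //.
by apply: eq_count => j; rewrite /letter -mul2n.
Qed.

Lemma occ001E n (w : (2 * n).-tuple bool) : occ001 w = occ001_seq w.
Proof.
rewrite /occ001 (card_ord_count _ (fun j => (j.+2 < 2 * n) &&
  [&& ~~ letter w j, ~~ letter w j.+1 & letter w j.+2])).
by have := occ001_seq_count w; rewrite size_tuple => <-.
Qed.

(* fold_pos n i is the (0-based) position of w read at position i of the folded word
   w_1 w_2n w_2 w_(2n-1) ...; unfold_pos n is its inverse on [0, 2n). *)
Definition fold_pos n i := if odd i then 2 * n - 1 - i./2 else i./2.
Definition unfold_pos n x := if x < n then x.*2 else (2 * n - 1 - x).*2.+1.

Lemma fold_pos_lt n i : i < 2 * n -> fold_pos n i < 2 * n.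
Proof. by rewrite /fold_pos; move: (odd_double_half i); case: odd => /=; lia. Qed.

Lemma unfold_pos_lt n x : x < 2 * n -> unfold_pos n x < 2 * n.
Proof. by rewrite /unfold_pos -!mul2n; case: ifP; lia. Qed.

Lemma unfold_posK n x : x < 2 * n -> fold_pos n (unfold_pos n x) = x.
Proof.
rewrite /unfold_pos /fold_pos => lt_x.
by case: ltnP => le_x; rewrite /= ?odd_double /= ?doubleK ?uphalf_double //; lia.
Qed.

Lemma fold_posK n i : i < 2 * n -> unfold_pos n (fold_pos n i) = i.
Proof.
rewrite /fold_pos /unfold_pos; move: (odd_double_half i).
by case: odd => /= half_i lt_i; case: ifP; lia.
Qed.

Lemma perm_fold_pos n : perm_eq [seq fold_pos n i | i <- iota 0 (2 * n)] (iota 0 (2 * n)).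
Proof.
apply: uniq_perm; rewrite ?iota_uniq //.
  rewrite map_inj_in_uniq ?iota_uniq // => i i'; rewrite !mem_iota /= => lt_i lt_i' eq_ii'.
  by rewrite -(fold_posK lt_i) -(fold_posK lt_i') eq_ii'.
move=> x; rewrite mem_iota /=; apply/mapP/idP => [[i]|lt_x].
  by rewrite mem_iota /= => lt_i ->; apply: fold_pos_lt.
by exists (unfold_pos n x); rewrite ?unfold_posK // mem_iota unfold_pos_lt.
Qed.

Definition fold_word n (w : (2 * n).-tuple bool) : (2 * n).-tuple bool :=
  Tuple (introT eqP (size_mkseq (fun i => nth false w (fold_pos n i)) (2 * n))).

Lemma nth_fold_word n (w : (2 * n).-tuple bool) i :
  i < 2 * n -> nth false (fold_word w) i = nth false w (fold_pos n i).
Proof. exact: nth_mkseq. Qed.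

Lemma fold_word_inj n : injective (@fold_word n).
Proof.
move=> w1 w2 eq_w; apply/val_inj/(@eq_from_nth _ false); rewrite ?size_tuple // => x lt_x.
by rewrite -(unfold_posK lt_x) -!nth_fold_word ?unfold_pos_lt // eq_w.
Qed.

Lemma inG_fold_word n (w : (2 * n).-tuple bool) : inG (fold_word w) = inG w.
Proof.
rewrite /inG.
have -> : tval (fold_word w) = map (nth false w) (map (fold_pos n) (iota 0 (2 * n))).
  by rewrite -map_comp.
rewrite (permP (perm_map _ (perm_fold_pos n))).
by have := mkseq_nth false w; rewrite size_tuple /mkseq => ->.
Qed.

Lemma o00_fold_word n (w : (2 * n).-tuple bool) : o00 (fold_word w) = sz w.
Proof.
apply: eq_card => j; have lt_j := ltn_ord j.
have [lt_2j lt_2j1] : 2 * j < 2 * n /\ (2 * j).+1 < 2 * n by lia.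
rewrite !inE /letter !nth_fold_word // /fold_pos (mul2n j) /=.
by rewrite odd_double doubleK uphalf_double.
Qed.

Lemma card_sz_o00 n k :
  #|[set w : (2 * n).-tuple bool | inG w && (sz w == k)]| =
  #|[set w : (2 * n).-tuple bool | inG w && (o00 w == k)]|.
Proof.
rewrite -[RHS](card_preimset _ (@fold_word_inj n)).
by apply: eq_card => w; rewrite !inE inG_fold_word o00_fold_word.
Qed.

Theorem theorem3p3 (n k : nat) :
  #|[set w : (2 * n).-tuple bool | inG w && (sz w == k)]| =
    #|[set w : (2 * n).-tuple bool | inG w && (o00 w == k)]| /\
  #|[set w : (2 * n).-tuple bool | inG w && (o00 w == k)]| =
    #|[set w : (2 * n).-tuple bool | inG w && (occ001 w == k)]|.
Proof.
split; first exact: card_sz_o00.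
have card_count (stat : (2 * n).-tuple bool -> nat) (stat_seq : seq bool -> nat) :
    (forall w, stat w = stat_seq w) ->
    #|[set w | inG w && (stat w == k)]| =
    count_mem k [seq stat_seq w | w <- words (2 * n) & zeros w == n].
  move=> statE; rewrite count_map count_filter -card_tuple_words.
  by apply: eq_card => w; rewrite !inE statE andbC.
rewrite (card_count _ _ (@o00E n)) (card_count _ _ (@occ001E n)).
exact: (permP (perm_o00_occ001 n)).
Qed.
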